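(* Let $G$ be labeled by an $\mathcal{AL}$ labeling $\langle r,d_1,d_2\rangle$, and let $x$ be a black node that belongs to class $A$ or $B$. Then $\mathit{A\_or\_B}(x)$ returns ``$B$'' if $x$ is in class $B$, and returns ``$A$'' otherwise. The robot is in $x$ when $\mathit{A\_or\_B}(x)$ exits. In the call $\mathit{A\_or\_B}(x)$ the robot needs $O(d_1\log\Delta)$ bits of memory, and the total number of edge traversals is $O(\Delta^{2d_1-1})$.
   Context: $G$ is an undirected connected anonymous graph (loops and multiple edges allowed) of maximum degree $\Delta$ and diameter $D$, with ports $0,\dots,\mathtt{deg}(v)-1$ at each node $v$; the robot sees the degree, the color of the current node and the entry port and moves by choosing exit ports. $\mathcal{AL}$ labeling $\langle r,d_1,d_2\rangle$: root $r$; $d(\cdot,\cdot)$ graph distance; integers $d_1\ge 2$, $d_2$ with $\lfloor d_2/2\rfloor\ge d_1$; $q=d_1+d_2+2$; classes $C=\{v:d(r,v)\bmod q=0\}$, $D=\{v:d(r,v)\bmod q=1\}$, $A=\{v:d(r,v)\bmod q=d_2+1\}$, $B=\{v:d(r,v)\bmod q=d_1+d_2+1\}$; nodes of $A\cup B\cup C\cup D$ are black, others white; it is assumed $D\ge d_1+d_2+1$. The white radius $R_W(v)$ of a node $v$ is $\ell-1$, where $\ell$ is the distance from $v$ to a nearest black node. White local search from $u$ within radius $\ell$: the recursive procedure $\mathit{WLS}(v,k,\mathit{inport})$, called as $\mathit{WLS}(u,\ell,-1)$: if $k=0$ report $v$; otherwise, if $v$ is black and $k\ne\ell$, return; otherwise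 for each port $\mathit{outport}\neq\mathit{inport}$ of $v$ in increasing order, move through it to neighbor $w$, call $\mathit{WLS}(w,k-1,\text{entry port at }w)$, and move back to $v$. Procedure $\mathit{A\_or\_B}(x)$: perform a white local search from $x$ within radius $d_1$; return ``$A$'' if some reported white node has white radius $d_1-1$, and ``$B$'' otherwise. The robot ends at $x$. *)

From mathcomp Require Import all_boot.

Set Implicit Arguments.
Unset Strict Implicit.
Unset Printing Implicit Defensive.

(* Node v has ports
   0, ..., deg v - 1.  Leaving v through port p < deg v leads to node
   [nbr v p], entering it through port [ent v p].  Loops and multiple
   edges are allowed.  (Values of nbr/ent at p >= deg v are irrelevant.) *)
Definition port_graph (V : finType) (deg : V -> nat) (nbr : V -> nat -> V)
  (ent : V -> nat -> nat) : Prop :=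
  forall v p, p < deg v ->
    [/\ ent v p < deg (nbr v p),
        nbr (nbr v p) (ent v p) = v &
        ent (nbr v p) (ent v p) = p].

Definition adj (V : finType) (deg : V -> nat) (nbr : V -> nat -> V) : rel V :=
  fun u w => [exists p : 'I_(deg u), nbr u p == w].

Fixpoint ball (V : finType) (deg : V -> nat) (nbr : V -> nat -> V)
  (k : nat) (u : V) : {set V} :=
  match k with
  | 0 => [set u]
  | k'.+1 => let B := ball deg nbr k' u in
             B :|: [set w | [exists v in B, adj deg nbr v w]]
  end.

(* graph distance (for a connected graph, every node lies in
   ball (#|V|-1) u, so this is the least k with v in ball k u) *)
Definition dist (V : finType) (deg : V -> nat) (nbr : V -> nat -> V)
  (u v : V) : nat :=
  find (fun k => v \in ball deg nbr k u) (iota 0 #|V|).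

Definition connected (V : finType) (deg : V -> nat) (nbr : V -> nat -> V) : Prop :=
  forall u v : V, connect (adj deg nbr) u v.

Definition maxdeg (V : finType) (deg : V -> nat) : nat := \max_(v : V) deg v.
Definition diam (V : finType) (deg : V -> nat) (nbr : V -> nat -> V) : nat :=
  \max_(u : V) \max_(v : V) dist deg nbr u v.

Definition ALq (d1 d2 : nat) : nat := d1 + d2 + 2.

Definition inC (V : finType) (deg : V -> nat) (nbr : V -> nat -> V)
  (r : V) (d1 d2 : nat) (v : V) : bool :=
  dist deg nbr r v %% ALq d1 d2 == 0.
Definition inD (V : finType) (deg : V -> nat) (nbr : V -> nat -> V)
  (r : V) (d1 d2 : nat) (v : V) : bool :=
  dist deg nbr r v %% ALq d1 d2 == 1.
Definition inA (V : finType) (deg : V -> nat) (nbr : V -> nat -> V)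
  (r : V) (d1 d2 : nat) (v : V) : bool :=
  dist deg nbr r v %% ALq d1 d2 == d2 + 1.
Definition inB (V : finType) (deg : V -> nat) (nbr : V -> nat -> V)
  (r : V) (d1 d2 : nat) (v : V) : bool :=
  dist deg nbr r v %% ALq d1 d2 == d1 + d2 + 1.

Definition AL_black (V : finType) (deg : V -> nat) (nbr : V -> nat -> V)
  (r : V) (d1 d2 : nat) (v : V) : bool :=
  [|| inA deg nbr r d1 d2 v, inB deg nbr r d1 d2 v,
      inC deg nbr r d1 d2 v | inD deg nbr r d1 d2 v].

(* At each step the robot observes the degree, the colour
   of the current node and the entry port (None before its first move),
   and either moves through a chosen port or stops with an output.
   Its memory is a state whose contents are encoded as a list of
   natural-number registers; the memory size in bits is the total
   binary length of the registers. *)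
Record obs := Obs { odeg : nat; ocol : bool; oentry : option nat }.

Inductive act (S O : Type) := AMove of nat & S | AStop of O.
Arguments AMove {S O}.
Arguments AStop {S O}.

Record robot (O : Type) := Robot {
  rstate : Type;
  rinit : rstate;
  rstep : rstate -> obs -> act rstate O;
  renc : rstate -> seq nat }.

(* number of bits of n in binary (0 takes one bit) *)
Definition bitlen (n : nat) : nat := (trunc_log 2 n).+1.

Definition rbits O (R : robot O) (s : rstate R) : nat :=
  sumn (map bitlen (renc s)).

(* Returns Some (output, final node, number of edge traversals,
   maximal memory in bits over all states used) if the robot stops
   within the fuel, None otherwise (or on an invalid port). *)
Fixpoint exec (V : finType) (deg : V -> nat) (nbr : V -> nat -> V)
  (ent : V -> nat -> nat) (col : V -> bool) O (R : robot O)
  (fuel : nat) (v : V) (e : option nat) (s : rstate R)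
  : option (O * V * nat * nat) :=
  match fuel with
  | 0 => None
  | fuel'.+1 =>
    match rstep s (Obs (deg v) (col v) e) with
    | AStop o => Some (o, v, 0, rbits s)
    | AMove p s' =>
      if p < deg v then
        match @exec V deg nbr ent col O R fuel' (nbr v p) (Some (ent v p)) s' with
        | Some (o, y, m, b) => Some (o, y, m.+1, maxn (rbits s) b)
        | None => None
        end
      else None
    end
  end.

(* Outer part: white local search WLS(x, d1, -1), implemented as a
   depth-first traversal whose stack [ab_ost] stores the entry ports of
   the nodes on the current path (most recent first).  When returning
   to a node, the observed entry port is the outport just explored.
   At each reported node w (depth d1), if w is white and no suitable
   node has been found yet, the robot tests whether w has white radius
   d1-1 by an inner depth-first search of depth d1-1 from w (stack
   [ab_ist]) looking for black nodes; w has white radius d1-1 iff no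
   black node is found (w is within distance d1 of the black node x).
   Modes: 0 outer-arrive, 1 outer-return, 2 inner-arrive, 3 inner-return. *)
Inductive cls := ClsA | ClsB.

Record ABst := ABSt {
  ab_mode : nat; ab_found : bool; ab_blk : bool;
  ab_ost : seq nat; ab_ist : seq nat }.

Definition ab_enc (s : ABst) : seq nat :=
  [:: ab_mode s; nat_of_bool (ab_found s); nat_of_bool (ab_blk s);
      size (ab_ost s)] ++ ab_ost s ++ ab_ist s.

Definition first_out (from : nat) (excl : option nat) (d : nat) : option nat :=
  let p := if excl == Some from then from.+1 else from in
  if p < d then Some p else None.

Definition set_mode m s := ABSt m (ab_found s) (ab_blk s) (ab_ost s) (ab_ist s).

(* return to the parent in the outer search, or stop at x *)
Definition outer_return (s : ABst) : act ABst cls :=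
  match ab_ost s with
  | p :: rest => AMove p (ABSt 1 (ab_found s) (ab_blk s) rest (ab_ist s))
  | [::] => AStop (if ab_found s then ClsA else ClsB)
  end.

Definition outer_iter (d : nat) (s : ABst) (from : nat) : act ABst cls :=
  match first_out from (ohead (ab_ost s)) d with
  | Some p => AMove p (set_mode 0 s)
  | None => outer_return s
  end.

Definition inner_return (s : ABst) : act ABst cls :=
  match ab_ist s with
  | p :: rest => AMove p (ABSt 3 (ab_found s) (ab_blk s) (ab_ost s) rest)
  | [::] => outer_return s (* not reached *)
  end.

Definition inner_iter (d : nat) (s : ABst) (from : nat) : act ABst cls :=
  match first_out from (ohead (ab_ist s)) d with
  | Some p => AMove p (set_mode 2 s)
  | None =>
    match ab_ist s with
    | [::] => (* inner search finished, back at w *)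
      outer_return (ABSt 1 (ab_found s || ~~ ab_blk s) (ab_blk s)
                          (ab_ost s) (ab_ist s))
    | _ => inner_return s
    end
  end.

Definition ab_step (d1 : nat) (s : ABst) (o : obs) : act ABst cls :=
  let d := odeg o in
  let c := ocol o in
  let e := oentry o in
  match ab_mode s with
  | 0 =>
    let s1 := match e with
              | Some p => ABSt 0 (ab_found s) (ab_blk s) (p :: ab_ost s) (ab_ist s)
              | None => s end in
    let dep := size (ab_ost s1) in
    if dep == d1 then
      if ~~ c && ~~ ab_found s1
      then inner_iter d (ABSt 3 (ab_found s1) false (ab_ost s1) [::]) 0
      else outer_return s1
    else if (dep != 0) && c then outer_return s1
    else outer_iter d s1 0
  | 1 => outer_iter d s (match e with Some q => q.+1 | None => 0 end)
  | 2 =>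
    let s1 := match e with
              | Some p => ABSt 2 (ab_found s) (ab_blk s) (ab_ost s) (p :: ab_ist s)
              | None => s end in
    if c then inner_return (ABSt 2 (ab_found s1) true (ab_ost s1) (ab_ist s1))
    else if size (ab_ist s1) == d1.-1 then inner_return s1
    else inner_iter d s1 0
  | _ => inner_iter d s (match e with Some q => q.+1 | None => 0 end)
  end.

Definition AorB_robot (d1 : nat) : robot cls :=
  @Robot cls ABst (ABSt 0 false false [::] [::]) (ab_step d1) ab_enc.
Arguments exec {V} deg nbr ent col {O} R fuel v e s.

(* Both searches of the robot are depth-first recursions over port loops, so
   what they find is described by the boolean recursions [sees_black],
   [near_black] and [finds_far_white]; a search of depth [j] makes at most
   [dfs_cost j] = O(Delta^j) moves and its stacks hold at most [d1] ports.
   The levels d(r, .) of the AL labeling decide the answer.  From an A-node,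
   the chain of parents leads [d1] levels down through white nodes to a node
   with no black node within distance [d1 - 1], because the black levels below
   the A-level lie [d2 >= 2 d1] levels lower.  From a B-node, every white node
   within [d1] moves lies strictly between the A-level and the B-level, hence
   within distance [d1 - 1] of the black A-level. *)

From mathcomp Require Import all_boot zify.

Set Implicit Arguments.
Unset Strict Implicit.
Unset Printing Implicit Defensive.

Lemma leq_bitlen m n : m <= n -> bitlen m <= bitlen n.
Proof. by move=> le_mn; rewrite /bitlen ltnS leq_trunc_log. Qed.

Lemma bitlen_leS n : bitlen n <= n.+1.
Proof.
rewrite /bitlen ltnS; case: n => [|n]; first by rewrite trunc_log0.
exact: leq_trans (ltnW (ltn_expl _ (erefl : 1 < 2))) (trunc_logP _ _).
Qed.

Lemma bitlen_bool (b : bool) : bitlen b = 1.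
Proof. by case: b. Qed.

Lemma sumn_bitlen_bounded Dl (s : seq nat) :
  all (fun p => p < Dl) s -> sumn (map bitlen s) <= size s * bitlen Dl.
Proof.
elim: s => //= a s IHs /andP [lt_aD /IHs].
by have := leq_bitlen (ltnW lt_aD); lia.
Qed.

Section Run.
Variables (V : finType) (deg : V -> nat) (nbr : V -> nat -> V) (ent : V -> nat -> nat).
Variables (col : V -> bool) (d1 Dl : nat).

Definition obs_at (v : V) (e : option nat) : obs := Obs (deg v) (col v) e.

Definition small_stack (st : seq nat) := (size st <= d1) && all (fun p => p < Dl) st.

Definition ab_bounded (s : ABst) :=
  [&& ab_mode s <= 3, small_stack (ab_ost s) & small_stack (ab_ist s)].

Definition mem_bound := 5 + d1 + 2 * (d1 * bitlen Dl).

Lemma ab_bounded_bits s : ab_bounded s -> rbits (R := AorB_robot d1) s <= mem_bound.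
Proof.
case: s => md f b ost ist /and3P [/= le_md3 /andP [le_ost ost_D] /andP [le_ist ist_D]].
rewrite /rbits /= map_cat sumn_cat !bitlen_bool.
have := sumn_bitlen_bounded ost_D; have := sumn_bitlen_bounded ist_D.
have : bitlen md <= 2 := leq_bitlen le_md3; have := leq_trans (leq_bitlen le_ost) (bitlen_leS d1).
have := leq_mul le_ost (leqnn (bitlen Dl)); have := leq_mul le_ist (leqnn (bitlen Dl)).
rewrite /mem_bound; lia.
Qed.

Inductive run : V -> option nat -> ABst -> V -> option nat -> ABst -> nat -> Prop :=
| run_stay v e s : ab_bounded s -> run v e s v e s 0
| run_move v e s p s1 v' e' s' n :
    ab_step d1 s (obs_at v e) = AMove p s1 -> p < deg v -> ab_bounded s ->
    run (nbr v p) (Some (ent v p)) s1 v' e' s' n -> run v e s v' e' s' n.+1.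

Lemma run_cat v1 e1 s1 v2 e2 s2 v3 e3 s3 n1 n2 :
  run v1 e1 s1 v2 e2 s2 n1 -> run v2 e2 s2 v3 e3 s3 n2 ->
  run v1 e1 s1 v3 e3 s3 (n1 + n2).
Proof.
elim=> // v e s p s' v' e' s'' n step_s lt_p bnd_s _ IHrun /IHrun.
exact: run_move.
Qed.

Lemma run_bounded_r v e s v' e' s' n : run v e s v' e' s' n -> ab_bounded s'.
Proof. by elim. Qed.

Lemma run_move1 v e s p s' :
  ab_step d1 s (obs_at v e) = AMove p s' -> p < deg v -> ab_bounded s -> ab_bounded s' ->
  run v e s (nbr v p) (Some (ent v p)) s' 1.
Proof. by move=> step_s lt_p bnd_s bnd_s'; apply: run_move step_s _ _ (run_stay _ _ _). Qed.

Lemma exec_move fuel v e s p s1 :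
  ab_step d1 s (obs_at v e) = AMove p s1 -> p < deg v ->
  exec deg nbr ent col (AorB_robot d1) fuel.+1 v e s =
  if exec deg nbr ent col (AorB_robot d1) fuel (nbr v p) (Some (ent v p)) s1 is Some (o, y, n, b)
  then Some (o, y, n.+1, maxn (rbits (R := AorB_robot d1) s) b) else None.
Proof. by rewrite /obs_at /= => -> ->. Qed.

Lemma exec_run v e s v' e' s' n o :
  run v e s v' e' s' n -> ab_step d1 s' (obs_at v' e') = AStop o ->
  exists2 b, exec deg nbr ent col (AorB_robot d1) n.+1 v e s = Some (o, v', n, b)
           & b <= mem_bound.
Proof.
elim=> [{}v {}e {}s bnd_s stop_s | {}v {}e {}s p s1 v2 e2 s2 m step_s lt_p bnd_s _ IHrun stop_s2].
  exists (rbits (R := AorB_robot d1) s); last exact: ab_bounded_bits.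
  by rewrite /obs_at in stop_s; rewrite /= stop_s.
have [b exec_s1 le_b] := IHrun stop_s2.
exists (maxn (rbits (R := AorB_robot d1) s) b); last by rewrite geq_max le_b ab_bounded_bits.
by rewrite (exec_move _ step_s lt_p) exec_s1.
Qed.

Definition out_ports (u : V) (ex : option nat) (from : nat) :=
  [seq p <- iota from (deg u - from) | Some p != ex].

Lemma out_ports_nil u ex from : deg u <= from -> out_ports u ex from = [::].
Proof. by rewrite /out_ports -subn_eq0 => /eqP ->. Qed.

Lemma out_ports_cons u ex from : from < deg u ->
  out_ports u ex from =
  if Some from != ex then from :: out_ports u ex from.+1 else out_ports u ex from.+1.
Proof. by move=> lt_from; rewrite /out_ports -(subnSK lt_from) /=; case: ifP. Qed.

Lemma mem_out_ports u ex p : (p \in out_ports u ex 0) = (p < deg u) && (Some p != ex).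
Proof. by rewrite mem_filter mem_iota subn0 add0n andbC. Qed.

Lemma first_out_ge from ex d : d <= from -> first_out from ex d = None.
Proof.
by move=> le_d; rewrite /first_out; case: (_ == _); rewrite ltnNge ?le_d // (leq_trans le_d).
Qed.

Lemma first_out_skip from d : first_out from (Some from) d = first_out from.+1 (Some from) d.
Proof. by rewrite /first_out eqxx; case: eqP => // -[/n_Sn]. Qed.

Lemma first_out_hit from ex d : Some from != ex -> from < d -> first_out from ex d = Some from.
Proof. by rewrite /first_out eq_sym => /negbTE -> ->. Qed.

Fixpoint dfs_cost (j : nat) : nat := if j is j'.+1 then 1 + Dl * (dfs_cost j').+1 else 1.

Lemma dfs_cost_gt0 j : 0 < dfs_cost j.
Proof. by case: j. Qed.

Hypothesis port_ok : port_graph deg nbr ent.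

(* One port loop of a depth-first search at [u]: the ports [from], ...,
   [deg u - 1] other than [ex] are tried in turn, and the outcome of the child
   search behind each is or-ed into a flag.  The states are [mk mode flag k],
   where [k] is a bit the children may overwrite. *)
Section Scan.
Variables (u : V) (ex : option nat) (m mr : nat) (mk : nat -> bool -> bool -> ABst).
Variables (iter : nat -> ABst -> nat -> act ABst cls) (fin : ABst -> act ABst cls).
Hypothesis iterE : forall md b k from, iter (deg u) (mk md b k) from =
  if first_out from ex (deg u) is Some p then AMove p (mk m b k) else fin (mk md b k).
Hypothesis returnE : forall b k p,
  ab_step d1 (mk mr b k) (obs_at u (Some p)) = iter (deg u) (mk mr b k) p.+1.
Variables (child : nat -> bool) (c : nat).
Hypothesis child_run : forall p b k, p < deg u -> Some p != ex ->
  exists k' n, run (nbr u p) (Some (ent u p)) (mk m b k)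
                   (nbr (nbr u p) (ent u p)) (Some (ent (nbr u p) (ent u p)))
                   (mk mr (b || child p) k') n /\ n <= c.

Lemma scan_run from md b k e s :
  ab_bounded s -> ab_step d1 s (obs_at u e) = iter (deg u) (mk md b k) from ->
  exists e' s' md' k' n, run u e s u e' s' n
    /\ ab_step d1 s' (obs_at u e') = fin (mk md' (b || has child (out_ports u ex from)) k')
    /\ n <= (deg u - from) * c.+1.
Proof.
move Hn : (deg u - from) => n.
elim: n from md b k e s Hn => [|n IHn] from md b k e s Hn bnd_s step_s.
  have le_deg : deg u <= from by rewrite -subn_eq0 Hn.
  exists e, s, md, k, 0; split; first exact: run_stay.
  by rewrite out_ports_nil // orbF step_s iterE first_out_ge.
have lt_from : from < deg u by rewrite -subn_gt0 Hn.
have Hn' : deg u - from.+1 = n by rewrite subnS Hn.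
rewrite (out_ports_cons ex lt_from); case: (eqVneq ex (Some from)) => [ex_from | ex_from] /=.
  have step_next : ab_step d1 s (obs_at u e) = iter (deg u) (mk md b k) from.+1.
    by rewrite step_s !iterE ex_from first_out_skip.
  have [e' [s' [md' [k' [n' [run_s [step_s' le_n']]]]]]] := IHn _ _ _ _ _ _ Hn' bnd_s step_next.
  exists e', s', md', k', n'; do 2!split => //.
  by apply: leq_trans le_n' _; rewrite leq_mul2r leqnSn orbT.
rewrite iterE first_out_hit 1?eq_sym // in step_s.
case: (port_ok lt_from) => lt_ent nbr_back ent_back.
have [k1 [n1 [run1 le_n1]]] := child_run b k lt_from ltac:(by rewrite eq_sym).
rewrite nbr_back ent_back in run1.
have [e' [s' [md' [k' [n' [run_s [step_s' le_n']]]]]]] :=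
  IHn _ _ _ _ _ _ Hn' (run_bounded_r run1) (returnE _ _ _).
exists e', s', md', k', (n1 + n').+1; split.
  by apply: run_move step_s lt_from bnd_s _; apply: run_cat run1 run_s.
by rewrite orbA; split=> //; rewrite mulSn; lia.
Qed.
End Scan.

Hypothesis deg_le : forall v, deg v <= Dl.

Lemma scan_cost_le u n c : n <= (deg u - 0) * c.+1 -> n <= Dl * c.+1.
Proof. by move=> /leq_trans; apply; rewrite subn0 leq_mul2r deg_le orbT. Qed.

Lemma small_stack_cons u e st :
  e < deg u -> size st < d1 -> small_stack st -> small_stack (e :: st).
Proof.
by move=> lt_e lt_st /andP [_ st_D]; rewrite /small_stack /= lt_st st_D (leq_trans lt_e (deg_le u)).
Qed.

Fixpoint sees_black (j : nat) (u : V) (e : nat) : bool :=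
  col u || if j is j'.+1
           then has (fun p => sees_black j' (nbr u p) (ent u p)) (out_ports u (Some e) 0)
           else false.

Definition inner_spec j := forall u e f blk ost ist,
  e < deg u -> size ist + j.+1 = d1.-1 -> small_stack ost -> small_stack ist ->
  exists n, run u (Some e) (ABSt 2 f blk ost ist) (nbr u e) (Some (ent u e))
                (ABSt 3 f (blk || sees_black j u e) ost ist) n /\ n <= dfs_cost j.

Lemma inner_step_back u e f blk ost ist : col u || ((size ist).+1 == d1.-1) ->
  ab_step d1 (ABSt 2 f blk ost ist) (obs_at u (Some e)) = AMove e (ABSt 3 f (blk || col u) ost ist).
Proof. by rewrite /obs_at /ab_step /=; case: (col u) => /= [|->]; rewrite ?orbT ?orbF. Qed.

Lemma inner_search j : inner_spec j.
Proof.
elim: j => [|j IHj] u e f blk ost ist lt_e size_ist ost_ok ist_ok;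
  have bnd md b : md <= 3 -> ab_bounded (ABSt md f b ost ist)
    by move=> le_md; rewrite /ab_bounded /= le_md ost_ok ist_ok.
  have last_u : col u || ((size ist).+1 == d1.-1) by apply/orP; right; apply/eqP; lia.
  by exists 1; split=> //; rewrite /= orbF; apply: run_move1; rewrite ?inner_step_back ?bnd.
case: (boolP (col u)) => [black_u | white_u].
  exists 1; split; last exact: dfs_cost_gt0.
  by rewrite /= black_u /=; apply: run_move1; rewrite ?inner_step_back ?black_u ?bnd.
have step_u : ab_step d1 (ABSt 2 f blk ost ist) (obs_at u (Some e)) =
              inner_iter (deg u) (ABSt 2 f blk ost (e :: ist)) 0.
  rewrite /obs_at /ab_step /= (negbTE white_u).
  by have -> : ((size ist).+1 == d1.-1) = false by apply/eqP; lia.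
case: (scan_run (ex := Some e) (m := 2) (mr := 3) (mk := fun md b _ => ABSt md f b ost (e :: ist))
    (iter := inner_iter) (fin := inner_return) (fun _ _ _ _ => erefl) (fun _ _ _ => erefl)
    (child := fun p => sees_black j (nbr u p) (ent u p)) (c := dfs_cost j)
    _ (k := false) (bnd 2 blk isT) step_u)
  => [p b k lt_p _ | e' [s' [md' [k' [n [run_u [step_s' le_n]]]]]]].
  case: (port_ok lt_p) => lt_ent _ _.
  have ist_ok' : small_stack (e :: ist) by apply: small_stack_cons lt_e _ ist_ok; lia.
  by exists k; apply: IHj _ _ f b ost (e :: ist) lt_ent (ltac:(rewrite /=; lia)) ost_ok ist_ok'.
exists n.+1; split; last by have := scan_cost_le le_n; rewrite /=; lia.
rewrite -[n.+1]addn1 /= (negbTE white_u) /=; apply: run_cat (run_u) _.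
exact: run_move1 step_s' lt_e (run_bounded_r run_u) (bnd 3 _ isT).
Qed.

Hypothesis d1_ge2 : 2 <= d1.

(* As the black node [x] is at most [d1] moves away, a reported white node
   [w] has white radius [d1 - 1] iff [~~ near_black w]. *)
Definition near_black (w : V) :=
  has (fun p => sees_black d1.-2 (nbr w p) (ent w p)) (out_ports w None 0).

Lemma near_black_test w e f ost s : small_stack ost -> ab_bounded s ->
  ab_step d1 s (obs_at w e) = inner_iter (deg w) (ABSt 3 f false ost [::]) 0 ->
  exists e' s' n, run w e s w e' s' n
    /\ ab_step d1 s' (obs_at w e') =
       outer_return (ABSt 1 (f || ~~ near_black w) (near_black w) ost [::])
    /\ n <= Dl * (dfs_cost d1.-2).+1.
Proof.
move=> ost_ok bnd_s step_s.
case: (scan_run (ex := None) (m := 2) (mr := 3) (mk := fun md b _ => ABSt md f b ost [::])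
    (iter := inner_iter)
    (fin := fun s => outer_return (ABSt 1 (ab_found s || ~~ ab_blk s) (ab_blk s) (ab_ost s) [::]))
    (fun _ _ _ _ => erefl) (fun _ _ _ => erefl)
    (child := fun p => sees_black d1.-2 (nbr w p) (ent w p)) (c := dfs_cost d1.-2)
    _ (k := false) bnd_s step_s)
  => [p b k lt_p _ | e' [s' [md' [k' [n [run_w [step_s' le_n]]]]]]].
  case: (port_ok lt_p) => lt_ent _ _.
  exists k; exact: (@inner_search d1.-2 _ _ f b ost [::] lt_ent (ltac:(rewrite /=; lia)) ost_ok).
by exists e', s', n; split=> //; split; [exact: step_s' | exact: scan_cost_le le_n].
Qed.

(* [j] is the number of moves left to the report depth [d1]. *)
Fixpoint finds_far_white (j : nat) (v : V) (e : nat) : bool :=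
  ~~ col v && if j is j'.+1
              then has (fun p => finds_far_white j' (nbr v p) (ent v p)) (out_ports v (Some e) 0)
              else ~~ near_black v.

Definition outer_spec j := forall v e f blk ost,
  e < deg v -> size ost + j.+1 = d1 -> small_stack ost ->
  exists blk' n, run v (Some e) (ABSt 0 f blk ost [::]) (nbr v e) (Some (ent v e))
                     (ABSt 1 (f || finds_far_white j v e) blk' ost [::]) n
                 /\ n <= dfs_cost (j + d1.-1).

Lemma outer_step_back v e f blk ost : col v || f && ((size ost).+1 == d1) ->
  ab_step d1 (ABSt 0 f blk ost [::]) (obs_at v (Some e)) = AMove e (ABSt 1 f blk ost [::]).
Proof. by rewrite /obs_at /ab_step /=; case: (col v); case: f; case: eqP. Qed.

Lemma outer_step_leaf v e f blk ost : ~~ col v -> ~~ f -> (size ost).+1 = d1 ->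
  ab_step d1 (ABSt 0 f blk ost [::]) (obs_at v (Some e)) =
  inner_iter (deg v) (ABSt 3 f false (e :: ost) [::]) 0.
Proof. by rewrite /obs_at /ab_step /= => /negbTE -> /negbTE -> ->; rewrite eqxx. Qed.

Lemma outer_step_descend v e f blk ost : ~~ col v -> (size ost).+1 != d1 ->
  ab_step d1 (ABSt 0 f blk ost [::]) (obs_at v (Some e)) =
  outer_iter (deg v) (ABSt 0 f blk (e :: ost) [::]) 0.
Proof. by rewrite /obs_at /ab_step /= => /negbTE -> /negbTE ->. Qed.

Lemma outer_search j : outer_spec j.
Proof.
elim: j => [|j IHj] v e f blk ost lt_e size_ost ost_ok;
  have bnd md b k : md <= 3 -> ab_bounded (ABSt md b k ost [::])
    by move=> le_md; rewrite /ab_bounded /= le_md ost_ok.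
  case: (boolP (col v || f)) => [stop_v | /norP [white_v not_f]].
    exists blk, 1; split; last exact: dfs_cost_gt0.
    have -> : f || finds_far_white 0 v e = f by rewrite /=; case/orP: stop_v => ->; rewrite ?orbF.
    apply: run_move1 => //; try exact: bnd.
    by rewrite outer_step_back // -size_ost addn1 eqxx andbT.
  have leaf_v := @outer_step_leaf v e f blk ost white_v not_f (ltac:(lia)).
  have ost_ok' : small_stack (e :: ost) by apply: small_stack_cons lt_e _ ost_ok; lia.
  have [e' [s' [n [run_v [step_s' le_n]]]]] :=
    near_black_test ost_ok' (bnd 0 _ _ isT) leaf_v.
  exists (near_black v), n.+1; split.
    rewrite -[n.+1]addn1 /= white_v /=; apply: run_cat (run_v) _.
    exact: run_move1 step_s' lt_e (run_bounded_r run_v) (bnd 1 _ _ isT).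
  by have -> : 0 + d1.-1 = d1.-2.+1 by lia.
case: (boolP (col v)) => [black_v | white_v].
  exists blk, 1; split; last exact: dfs_cost_gt0.
  by rewrite /= black_v orbF; apply: run_move1; rewrite ?outer_step_back ?black_v ?bnd.
have ost_ok' : small_stack (e :: ost) by apply: small_stack_cons lt_e _ ost_ok; lia.
have step_v := @outer_step_descend v e f blk ost white_v (ltac:(by apply/eqP; lia)).
case: (scan_run (ex := Some e) (m := 0) (mr := 1) (mk := fun md b k => ABSt md b k (e :: ost) [::])
    (iter := outer_iter) (fin := outer_return) (fun _ _ _ _ => erefl) (fun _ _ _ => erefl)
    (child := fun p => finds_far_white j (nbr v p) (ent v p)) (c := dfs_cost (j + d1.-1))
    _ (bnd 0 _ _ isT) step_v)
  => [p b k lt_p _ | e' [s' [md' [k' [n [run_v [step_s' le_n]]]]]]].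
  case: (port_ok lt_p) => lt_ent _ _.
  exact: IHj _ _ b k (e :: ost) lt_ent (ltac:(rewrite /=; lia)) ost_ok'.
exists k', n.+1; split.
  rewrite -[n.+1]addn1 /= white_v /=; apply: run_cat (run_v) _.
  exact: run_move1 step_s' lt_e (run_bounded_r run_v) (bnd 1 _ _ isT).
by have := scan_cost_le le_n; rewrite addSn /=; lia.
Qed.

Definition finds_A (x : V) :=
  has (fun p => finds_far_white d1.-1 (nbr x p) (ent x p)) (out_ports x None 0).

Lemma robot_run x : exists n b,
  exec deg nbr ent col (AorB_robot d1) n.+1 x None (rinit (AorB_robot d1))
  = Some (if finds_A x then ClsA else ClsB, x, n, b)
  /\ b <= mem_bound /\ n <= Dl * (dfs_cost (d1.-1 + d1.-1)).+1.
Proof.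
have step_x : ab_step d1 (ABSt 0 false false [::] [::]) (obs_at x None) =
              outer_iter (deg x) (ABSt 0 false false [::] [::]) 0.
  rewrite /obs_at /ab_step /=.
  by have -> : (0 == d1) = false by apply/eqP; lia.
case: (scan_run (ex := None) (m := 0) (mr := 1) (mk := fun md b k => ABSt md b k [::] [::])
    (iter := outer_iter) (fin := outer_return) (fun _ _ _ _ => erefl) (fun _ _ _ => erefl)
    (child := fun p => finds_far_white d1.-1 (nbr x p) (ent x p)) (c := dfs_cost (d1.-1 + d1.-1))
    _ (isT : ab_bounded (ABSt 0 false false [::] [::])) step_x)
  => [p b k lt_p _ | e' [s' [md' [k' [n [run_x [step_s' le_n]]]]]]].
  case: (port_ok lt_p) => lt_ent _ _.
  exact: (@outer_search d1.-1 _ _ b k [::] lt_ent (ltac:(rewrite /=; lia)) isT).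
have [b exec_x le_b] := exec_run run_x step_s'.
by exists n, b; split; [exact: exec_x | split; [exact: le_b | exact: scan_cost_le le_n]].
Qed.

End Run.

Section Distance.
Variables (V : finType) (deg : V -> nat) (nbr : V -> nat -> V) (ent : V -> nat -> nat).
Hypothesis port_ok : port_graph deg nbr ent.
Hypothesis conn : connected deg nbr.
Variable r : V.

Local Notation lev v := (dist deg nbr r v).

Lemma in_ballS k u : (u \in ball deg nbr k.+1 r) =
  (u \in ball deg nbr k r) || [exists v in ball deg nbr k r, adj deg nbr v u].
Proof. by rewrite /= !inE. Qed.

Lemma path_ball x p k : path (adj deg nbr) x p -> x \in ball deg nbr k r ->
  last x p \in ball deg nbr (k + size p) r.
Proof.
elim: p x k => [|y p IHp] x k /=; first by rewrite addn0.
move=> /andP [adj_xy path_p] x_k; rewrite addnS -addSn; apply: IHp => //.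
by rewrite in_ballS; apply/orP; right; apply/existsP; exists x; rewrite x_k.
Qed.

Lemma mem_ball_dist u : u \in ball deg nbr (lev u) r.
Proof.
have /connectP [p path_p ->] := conn r u.
case: (shortenP path_p) => p' path_p' uniq_p' _.
have size_p' : size p' < #|V|.
  by have := max_card (mem (r :: p')); rewrite (card_uniqP uniq_p') /=.
have ball_p' : has (fun k => last r p' \in ball deg nbr k r) (iota 0 #|V|).
  apply/hasP; exists (size p'); first by rewrite mem_iota.
  by rewrite -[size p']add0n; apply: path_ball => //=; rewrite inE.
have lt_find : find (fun k => last r p' \in ball deg nbr k r) (iota 0 #|V|) < #|V|.
  by move: ball_p'; rewrite has_find size_iota.
by have := nth_find 0 ball_p'; rewrite /dist nth_iota // add0n.
Qed.

Lemma dist_le u k : u \in ball deg nbr k r -> lev u <= k.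
Proof.
move=> u_k; case: (ltnP k #|V|) => [lt_k | le_k].
  rewrite leqNgt; apply/negP => lt_ku.
  by have := before_find 0 lt_ku; rewrite nth_iota // add0n u_k.
by apply: leq_trans le_k; rewrite /dist; apply: leq_trans (find_size _ _) _; rewrite size_iota.
Qed.

Lemma dist_nbr_le u p : p < deg u -> lev (nbr u p) <= (lev u).+1.
Proof.
move=> lt_p; apply: dist_le; rewrite in_ballS; apply/orP; right.
apply/existsP; exists u; rewrite mem_ball_dist /=.
by apply/existsP; exists (Ordinal lt_p).
Qed.

Lemma dist_nbr_ge u p : p < deg u -> lev u <= (lev (nbr u p)).+1.
Proof. by move=> /port_ok [lt_ent nbr_back _]; have := dist_nbr_le lt_ent; rewrite nbr_back. Qed.

Lemma dist_parent u : 0 < lev u -> exists2 p, p < deg u & lev (nbr u p) = (lev u).-1.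
Proof.
move=> lev_gt0; have := mem_ball_dist u.
case lev_u: (lev u) lev_gt0 => [|k] // _; rewrite in_ballS => /orP [u_k|].
  by have := dist_le u_k; rewrite lev_u ltnn.
move=> /existsP [v /andP [v_k /existsP [p /eqP nbr_vp]]].
have [lt_ent nbr_back _] := port_ok (ltn_ord p); rewrite nbr_vp in lt_ent nbr_back.
exists (ent v p) => //; rewrite nbr_back.
by have := dist_le v_k; have := dist_nbr_ge lt_ent; rewrite nbr_back lev_u /=; lia.
Qed.

Lemma two_le_maxdeg x : 2 <= lev x -> 2 <= maxdeg deg.
Proof.
move=> lev_x; have [p lt_p lev_p] := dist_parent (u := x) (ltac:(lia)).
have [lt_ent nbr_back _] := port_ok lt_p.
have [p' lt_p' lev_p'] := dist_parent (u := nbr x p) (ltac:(lia)).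
have ne_p' : p' <> ent x p by move=> eq_p'; move: lev_p'; rewrite eq_p' nbr_back lev_p; lia.
by apply: leq_trans (leq_bigmax (nbr x p)); lia.
Qed.
End Distance.

Section Correctness.
Variables (V : finType) (deg : V -> nat) (nbr : V -> nat -> V) (ent : V -> nat -> nat).
Hypothesis port_ok : port_graph deg nbr ent.
Hypothesis conn : connected deg nbr.
Variables (r : V) (d1 d2 : nat).
Hypothesis d1_ge2 : 2 <= d1.
Hypothesis d2_ge : 2 * d1 <= d2.

Local Notation lev v := (dist deg nbr r v).
Local Notation black := (AL_black deg nbr r d1 d2).
Local Notation q := (d1 + d2 + 2).
Local Notation sees_black := (sees_black deg nbr ent black).
Local Notation near_black := (near_black deg nbr ent black d1).
Local Notation finds_far_white := (finds_far_white deg nbr ent black d1).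

Lemma AL_black_level v k i : lev v = k * q + i -> i < q ->
  black v = [|| i == d2 + 1, i == d1 + d2 + 1, i == 0 | i == 1].
Proof.
by move=> lev_v lt_iq; rewrite /AL_black /inA /inB /inC /inD /ALq lev_v modnMDl modn_small.
Qed.

Lemma white_below_A k y : k * q + 2 <= lev y <= k * q + d2 -> black y = false.
Proof.
move=> /andP [lo hi]; rewrite (@AL_black_level y k (lev y - k * q)); [| lia | lia].
by apply/negbTE; rewrite !negb_or; apply/and4P; split; apply/eqP; lia.
Qed.

Lemma sees_black_white_band lo hi : (forall y, lo <= lev y <= hi -> black y = false) ->
  forall j u e, lo + j <= lev u -> lev u + j <= hi -> sees_black j u e = false.
Proof.
move=> white_band; elim=> [|j IHj] u e lo_u hi_u /=.
  by rewrite white_band //; apply/andP; split; lia.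
rewrite white_band /=; last by apply/andP; split; lia.
apply/hasPn => p; rewrite mem_out_ports => /andP [lt_p _].
have := dist_nbr_le conn r lt_p; have := dist_nbr_ge port_ok conn r lt_p.
by move=> ? ?; apply/negbT; apply: IHj; lia.
Qed.

Lemma sees_black_descend a : (forall z, lev z = a -> black z) ->
  forall j u e, a <= lev u <= a + j -> lev u < lev (nbr u e) -> sees_black j u e.
Proof.
move=> black_a; elim=> [|j IHj] u e /andP [lo_u hi_u] up_e /=.
  by rewrite black_a //; lia.
have [/black_a -> // | /eqP ne_a] := eqVneq (lev u) a.
have [p lt_p lev_p] := dist_parent port_ok conn (r := r) (u := u) (ltac:(lia)).
apply/orP; right; apply/hasP; exists p.
  rewrite mem_out_ports lt_p /=; apply: contraTneq up_e => -[<-]; rewrite lev_p; lia.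
have [_ nbr_back _] := port_ok lt_p.
by apply: IHj; rewrite ?nbr_back; lia.
Qed.

Lemma near_black_above_A k w : k * q + d2 + 2 <= lev w <= k * q + d1 + d2 -> near_black w.
Proof.
move=> /andP [lo hi].
have [p lt_p lev_p] := dist_parent port_ok conn (r := r) (u := w) (ltac:(lia)).
apply/hasP; exists p; first by rewrite mem_out_ports lt_p.
have [_ nbr_back _] := port_ok lt_p.
apply: (@sees_black_descend (k * q + d2 + 1)); rewrite ?nbr_back; try lia.
by move=> z lev_z; rewrite (@AL_black_level z k (d2 + 1)) ?eqxx //; lia.
Qed.

Lemma finds_far_white_between_AB k : forall j v e,
  black v || (k * q + d2 + 2 <= lev v <= k * q + d1 + d2) -> finds_far_white j v e = false.
Proof.
elim=> [|j IHj] v e /=; case: (boolP (black v)) => //= _ band_v.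
  by rewrite (near_black_above_A band_v).
apply/hasPn => p; rewrite mem_out_ports => /andP [lt_p _].
have := dist_nbr_le conn r lt_p; have := dist_nbr_ge port_ok conn r lt_p => ? ?.
apply/negbT; apply: IHj.
have [lo | lo] := ltnP (lev (nbr v p)) (k * q + d2 + 2).
  by rewrite (@AL_black_level _ k (d2 + 1)) ?eqxx //; lia.
have [hi | hi] := leqP (lev (nbr v p)) (k * q + d1 + d2); first by apply/orP; right; apply/andP.
by rewrite (@AL_black_level _ k (d1 + d2 + 1)) ?eqxx ?orbT //; lia.
Qed.

Lemma finds_far_white_descend k : forall j v e, j < d1 ->
  lev v = k * q + d2 + 1 - d1 + j -> lev v < lev (nbr v e) -> finds_far_white j v e.
Proof.
elim=> [|j IHj] v e lt_j lev_v up_e /=.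
  rewrite (@white_below_A k) /=; last by apply/andP; split; lia.
  apply/hasPn => p; rewrite mem_out_ports => /andP [lt_p _].
  have := dist_nbr_le conn r lt_p; have := dist_nbr_ge port_ok conn r lt_p => ? ?.
  apply/negbT; apply: (@sees_black_white_band (k * q + 2) (k * q + d2)); try lia.
  exact: white_below_A.
rewrite (@white_below_A k) /=; last by apply/andP; split; lia.
have [p lt_p lev_p] := dist_parent port_ok conn (r := r) (u := v) (ltac:(lia)).
apply/hasP; exists p.
  rewrite mem_out_ports lt_p /=; apply: contraTneq up_e => -[<-]; rewrite lev_p; lia.
have [_ nbr_back _] := port_ok lt_p.
by apply: IHj; rewrite ?nbr_back; lia.
Qed.

Lemma finds_A_at_B k x : lev x = k * q + (d1 + d2 + 1) -> finds_A deg nbr ent black d1 x = false.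
Proof.
move=> lev_x; apply/hasPn => p; rewrite mem_out_ports => /andP [lt_p _].
apply/negbT; apply: (finds_far_white_between_AB (k := k)).
have := dist_nbr_le conn r lt_p; have := dist_nbr_ge port_ok conn r lt_p => ? ?.
case: (ltngtP (lev (nbr x p)) (lev x)) => [down | up | same].
- by apply/orP; right; apply/andP; split; lia.
- by rewrite (@AL_black_level _ k.+1 0) ?eqxx ?orbT //; rewrite ?mulSn; lia.
- by rewrite (@AL_black_level _ k (d1 + d2 + 1)) ?eqxx ?orbT //; lia.
Qed.

Lemma finds_A_at_A k x : lev x = k * q + (d2 + 1) -> finds_A deg nbr ent black d1 x.
Proof.
move=> lev_x; have [p lt_p lev_p] := dist_parent port_ok conn (r := r) (u := x) (ltac:(lia)).
apply/hasP; exists p; first by rewrite mem_out_ports lt_p.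
have [_ nbr_back _] := port_ok lt_p.
by apply: (finds_far_white_descend (k := k)); rewrite ?nbr_back; lia.
Qed.

Lemma finds_A_correct x : inA deg nbr r d1 d2 x || inB deg nbr r d1 d2 x ->
  finds_A deg nbr ent black d1 x = ~~ inB deg nbr r d1 d2 x.
Proof.
have lev_x := divn_eq (lev x) q; rewrite /inA /inB /ALq.
case: (eqVneq (lev x %% q) (d1 + d2 + 1)) => [B_x _ | _]; rewrite /= ?orbF.
  by rewrite (finds_A_at_B (k := lev x %/ q)) // {1}lev_x B_x.
by move=> /eqP A_x; rewrite (finds_A_at_A (k := lev x %/ q)) // {1}lev_x A_x.
Qed.
End Correctness.

Lemma dfs_cost_le Dl j : 2 <= Dl -> dfs_cost Dl j + 3 <= 4 * Dl ^ j.
Proof.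
move=> Dl_ge2; elim: j => [|j IHj] //=.
have : Dl * (dfs_cost Dl j).+1 + Dl * 2 <= Dl * (4 * Dl ^ j).
  by rewrite -mulnDr leq_mul2l; apply/orP; right; lia.
by rewrite expnS mulnCA; lia.
Qed.

Lemma traversals_le Dl d1 : 2 <= Dl -> 0 < d1 ->
  Dl * (dfs_cost Dl (d1.-1 + d1.-1)).+1 <= 4 * Dl ^ (2 * d1 - 1).
Proof.
move=> Dl_ge2 d1_gt0; have -> : 2 * d1 - 1 = (d1.-1 + d1.-1).+1 by lia.
rewrite expnS mulnCA leq_mul2l; have := dfs_cost_le (d1.-1 + d1.-1) Dl_ge2.
by move=> ?; apply/orP; right; lia.
Qed.

Lemma mem_bound_le d1 Dl : 2 <= d1 -> 2 <= Dl -> mem_bound d1 Dl <= 8 * d1 * trunc_log 2 Dl.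
Proof.
move=> d1_ge2 Dl_ge2; have : 0 < trunc_log 2 Dl by rewrite trunc_log_gt0.
rewrite /mem_bound /bitlen; set L := trunc_log 2 Dl => L_gt0.
have : d1 <= d1 * L by rewrite leq_pmulr.
rewrite -mulnA; lia.
Qed.

Theorem lemma4 :
  exists c1 c2 : nat,
  forall (V : finType) (deg : V -> nat) (nbr : V -> nat -> V)
         (ent : V -> nat -> nat),
    port_graph deg nbr ent ->
    connected deg nbr ->
  forall (r : V) (d1 d2 : nat),
    2 <= d1 ->
    d1 <= d2./2 ->
    d1 + d2 + 1 <= diam deg nbr ->
  forall x : V,
    inA deg nbr r d1 d2 x || inB deg nbr r d1 d2 x ->
    exists fuel m b : nat,
      exec deg nbr ent (AL_black deg nbr r d1 d2) (AorB_robot d1)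
           fuel x None (rinit (AorB_robot d1))
      = Some (if inB deg nbr r d1 d2 x then ClsB else ClsA, x, m, b)
      /\ b <= c1 * d1 * trunc_log 2 (maxdeg deg)
      /\ m <= c2 * (maxdeg deg) ^ (2 * d1 - 1).
Proof.
exists 8, 4 => V deg nbr ent port_ok conn r d1 d2 d1_ge2 d1_le_half _ x AB_x.
have d2_ge : 2 * d1 <= d2 by rewrite mul2n -geq_half_double.
have lev_x : 2 <= dist deg nbr r x.
  move: AB_x; rewrite /inA /inB /ALq => /orP [] /eqP lev_mod;
  by have := leq_mod (dist deg nbr r x) (d1 + d2 + 2); rewrite lev_mod; lia.
have [n [b [exec_x [le_b le_n]]]] :=
  robot_run (AL_black deg nbr r d1 d2) port_ok (fun v => leq_bigmax v) d1_ge2 x.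
rewrite (finds_A_correct port_ok conn d1_ge2 d2_ge AB_x) in exec_x.
exists n.+1, n, b; split; first by rewrite exec_x; case: (inB _ _ _ _ _ _).
have deg_ge2 := two_le_maxdeg port_ok conn lev_x.
split; first exact: leq_trans le_b (mem_bound_le d1_ge2 deg_ge2).
exact: leq_trans le_n (traversals_le deg_ge2 (ltnW d1_ge2)).
Qed.
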